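(* Let $d>0$, let $\ell$ be a certified lower bound with certificate matrix $\Lambda$, and suppose $f(d,\ell)=1$. Suppose $j\in\{1,\dots,m\}$ satisfies $0<a_j^\top y(d,\ell)-u_j\le\gamma_j(d,\ell)$. Define $$\ell^{(1)}:=\ell-\frac{2(t_j(d,\ell)-v_j(\ell))}{d_j\gamma_j(d,\ell)^2}e_j .$$ Then $\ell^{(1)}$ is a certified lower bound with certificate matrix $\Lambda$, $a_j^\top y(d,\ell^{(1)})=u_j$, and $$f(d,\ell^{(1)})=1-\Big(\frac{a_j^\top y(d,\ell)-u_j}{\gamma_j(d,\ell)}\Big)^2<1 .$$
   Context: Standing assumption: $A=[a_1|\cdots|a_m]\in\mathbb{R}^{n\times m}$ has columns of unit Euclidean norm and $\{A\lambda:\lambda\ge0\}=\mathbb{R}^n$; $u\in\mathbb{R}^m$. $D=\mathrm{diag}(d)$; $r(\ell)=\tfrac12(u+\ell)$, $v(\ell)=\tfrac12(u-\ell)$, $B(d)=ADA^\top$, $y(d,\ell)=B(d)^{-1}ADr(\ell)$, $t(d,\ell)=A^\top y(d,\ell)-r(\ell)$, $f(d,\ell)=v(\ell)^\top Dv(\ell)-t(d,\ell)^\top Dt(d,\ell)$, $\gamma_i(d,\ell)=\sqrt{f(d,\ell)a_i^\top B(d)^{-1}a_i}$ when $f(d,\ell)>0$. $\ell$ is a certified lower bound with certificate matrix $\Lambda\in\mathbb{R}^{m\times m}$ if $A\Lambda=-A$, $\Lambda\ge0$, $-\Lambda^\top u\ge\ell$. *)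

From HB Require Import structures.
From mathcomp Require Import all_boot all_order all_algebra.
Set Implicit Arguments. Unset Strict Implicit. Unset Printing Implicit Defensive.
Import Order.TTheory GRing.Theory Num.Theory.
Local Open Scope ring_scope.

Section Defs.
Variables (R : rcfType) (n m : nat).
Implicit Types (A : 'M[R]_(n, m)) (u d l : 'cV[R]_m).

Definition acol A (i : 'I_m) : 'cV[R]_n := col i A.

Definition unit_columns A : Prop :=
  forall i : 'I_m, \sum_(k < n) (A k i) ^+ 2 = 1.

Definition pos_spanning A : Prop :=
  forall x : 'cV[R]_n, exists lam : 'cV[R]_m,
    (forall i, 0 <= lam i 0) /\ A *m lam = x.

Definition Dmx d : 'M[R]_m := diag_mx d^T.
Definition rvec u l : 'cV[R]_m := 2^-1 *: (u + l).
Definition vvec u l : 'cV[R]_m := 2^-1 *: (u - l).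
Definition Bmx A d : 'M[R]_n := A *m Dmx d *m A^T.
Definition yvec A u d l : 'cV[R]_n := invmx (Bmx A d) *m (A *m Dmx d *m rvec u l).
Definition tvec A u d l : 'cV[R]_m := A^T *m yvec A u d l - rvec u l.
Definition fval A u d l : R :=
  ((vvec u l)^T *m Dmx d *m vvec u l) 0 0
  - ((tvec A u d l)^T *m Dmx d *m tvec A u d l) 0 0.
(* gamma_i(d,l) = sqrt (f(d,l) a_i^T B(d)^{-1} a_i)  (meaningful when f > 0) *)
Definition gammai A u d l (i : 'I_m) : R :=
  Num.sqrt (fval A u d l * (((acol A i)^T *m invmx (Bmx A d) *m acol A i) 0 0)).
Definition aTy A u d l (i : 'I_m) : R := ((acol A i)^T *m yvec A u d l) 0 0.

Definition certified A u l (Lam : 'M[R]_m) : Prop :=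
  A *m Lam = - A /\ (forall i j, 0 <= Lam i j) /\
  (forall i, l i 0 <= (- (Lam^T *m u)) i 0).

Definition evec (j : 'I_m) : 'cV[R]_m := delta_mx j 0.

End Defs.
Arguments evec {R m} j.

From HB Require Import structures.
From mathcomp Require Import all_boot all_order all_algebra.
From mathcomp Require Import ring.
Import Order.TTheory GRing.Theory Num.Theory.
Local Open Scope ring_scope.

(* Lowering [l_j] by [c] moves [r] by [-c/2 e_j] and [v] by [c/2 e_j]; as [y] is
   linear in [r], [t] moves by [c/2 (e_j - d_j w)] with [w = A^T B^-1 a_j].  The
   normal equations [A D t = 0] and [A D w = a_j] kill the cross term [<t, w>_D],
   so [f] becomes a quadratic in [c] whose coefficients only involve
   [t_j - v_j = a_j^T y - u_j] and [a_j^T B^-1 a_j], which equals [gamma_j^2] when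
   [f = 1].  The chosen [c] cancels [a_j^T y - u_j] and lowers [f] by the square of
   its ratio to [gamma_j]. *)

Section DiagForm.
Context {R : rcfType} {m : nat}.
Implicit Types (d x y z : 'cV[R]_m) (k : R).

Definition dform d x y : R := (x^T *m Dmx d *m y) 0 0.

Lemma dformE d x y : dform d x y = \sum_i x i 0 * (d i 0 * y i 0).
Proof.
rewrite /dform /Dmx mul_mx_diag mxE; apply: eq_bigr => i _; rewrite !mxE; ring.
Qed.

Lemma dformDZr d x y z k : dform d x (y + k *: z) = dform d x y + k * dform d x z.
Proof.
rewrite !dformE !mulr_sumr -!big_split /=; apply: eq_bigr => i _; rewrite !mxE; ring.
Qed.

Lemma dformDZ d x y k : dform d (x + k *: y) (x + k *: y)
  = dform d x x + 2 * k * dform d x y + k ^+ 2 * dform d y y.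
Proof.
rewrite !dformE !mulr_sumr -!big_split /=; apply: eq_bigr => i _; rewrite !mxE; ring.
Qed.

Lemma dform_evecr d x (j : 'I_m) : dform d x (evec j) = x j 0 * d j 0.
Proof.
rewrite dformE (bigD1 j) //= big1 => [|i /negPf neq_ij]; rewrite !mxE ?eqxx ?neq_ij /=.
  by rewrite mulr1 addr0.
by rewrite !mulr0.
Qed.

Lemma Dmx_evec d (j : 'I_m) : Dmx d *m evec j = d j 0 *: evec j.
Proof.
apply/matrixP => i k; rewrite /Dmx mul_diag_mx !mxE.
by case: (eqVneq i j) => [->|_] /=; rewrite ?mulr0.
Qed.

End DiagForm.

Section GramMatrix.
Context {R : rcfType} {n m : nat} {A : 'M[R]_(n, m)} {d : 'cV[R]_m}.

Lemma dform_trmxr (x : 'cV[R]_m) (z : 'cV[R]_n) :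
  dform d x (A^T *m z) = ((A *m Dmx d *m x)^T *m z) 0 0.
Proof. by rewrite /dform !trmx_mul /Dmx tr_diag_mx !mulmxA. Qed.

Lemma ADmx_evec (j : 'I_m) : A *m Dmx d *m evec j = d j 0 *: acol A j.
Proof. by rewrite -mulmxA Dmx_evec -scalemxAr /acol colE. Qed.

Lemma pos_spanning_trmx_inj (x : 'rV[R]_n) :
  pos_spanning A -> x *m A = 0 -> x = 0.
Proof.
move=> spanA xA0; have [lam [_ Alam]] := spanA x^T.
have sq_sum : \sum_k x 0 k ^+ 2 = 0.
  have <- : (x *m x^T) 0 0 = \sum_k x 0 k ^+ 2.
    by rewrite mxE; apply: eq_bigr => k _; rewrite !mxE.
  by rewrite -Alam mulmxA xA0 mul0mx mxE.
apply/rowP => k; rewrite mxE; apply/eqP; rewrite -sqrf_eq0.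
by rewrite (psumr_eq0P _ sq_sum) // => p _; exact: sqr_ge0.
Qed.

Lemma fvalE (u l : 'cV[R]_m) : fval A u d l
  = dform d (vvec u l) (vvec u l) - dform d (tvec A u d l) (tvec A u d l).
Proof. by []. Qed.

Lemma ADmx_invB (z : 'cV[R]_n) : Bmx A d \in unitmx ->
  A *m Dmx d *m (A^T *m (invmx (Bmx A d) *m z)) = z.
Proof. by move=> unitB; rewrite !mulmxA -[A *m _ *m _]/(Bmx A d) mulmxV ?mul1mx. Qed.

Lemma ADmx_tvec (u l : 'cV[R]_m) : Bmx A d \in unitmx ->
  A *m Dmx d *m tvec A u d l = 0.
Proof. by move=> unitB; rewrite /tvec mulmxBr /yvec ADmx_invB ?subrr. Qed.

Lemma Bmx_quad (x : 'rV[R]_n) :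
  (x *m Bmx A d *m x^T) 0 0 = \sum_k d k 0 * ((x *m A) 0 k) ^+ 2.
Proof.
have -> : x *m Bmx A d *m x^T = (x *m A) *m Dmx d *m (x *m A)^T.
  by rewrite trmx_mul /Bmx !mulmxA.
by rewrite /Dmx mul_mx_diag mxE; apply: eq_bigr => k _; rewrite !mxE; ring.
Qed.

Lemma Bmx_unit : (forall i, 0 < d i 0) -> pos_spanning A -> Bmx A d \in unitmx.
Proof.
move=> d_gt0 spanA; rewrite -row_free_unit -kermx_eq0; apply/eqP/row_matrixP => i.
rewrite row0; set x := row i _; apply: pos_spanning_trmx_inj => //.
have xB0 : x *m Bmx A d = 0 by apply/sub_kermxP; exact: row_sub.
have := Bmx_quad x; rewrite xB0 mul0mx mxE => /esym/psumr_eq0P terms_eq0.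
apply/matrixP => p k; rewrite ord1 [in RHS]mxE.
have /eqP := terms_eq0 (fun q _ => mulr_ge0 (ltW (d_gt0 q)) (sqr_ge0 _)) k isT.
by rewrite mulf_eq0 sqrf_eq0 gt_eqF //= => /eqP.
Qed.

End GramMatrix.

Section LowerBoundShift.
Context {R : rcfType} {n m : nat} (A : 'M[R]_(n, m)) (u d : 'cV[R]_m).
Variables (l : 'cV[R]_m) (j : 'I_m) (c : R).

Local Notation a := (acol A j).
Local Notation Binv := (invmx (Bmx A d)).
Local Notation l' := (l - c *: evec j).

Definition Bquad : R := (a^T *m Binv *m a) 0 0.

Lemma rvec_shift : rvec u l' = rvec u l - (c / 2) *: evec j.
Proof. by apply/matrixP => i k; rewrite /rvec !mxE; ring. Qed.

Lemma vvec_shift : vvec u l' = vvec u l + (c / 2) *: evec j.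
Proof. by apply/matrixP => i k; rewrite /vvec !mxE; ring. Qed.

Lemma yvec_shift :
  yvec A u d l' = yvec A u d l - (c / 2 * d j 0) *: (Binv *m a).
Proof.
by rewrite /yvec rvec_shift mulmxBr -(scalemxAr (c / 2)) ADmx_evec scalerA mulmxBr
  -(scalemxAr (c / 2 * d j 0)).
Qed.

Lemma tvec_shift : tvec A u d l'
  = tvec A u d l + (c / 2) *: (evec j - d j 0 *: (A^T *m (Binv *m a))).
Proof.
rewrite /tvec yvec_shift rvec_shift mulmxBr -scalemxAr.
move: (A^T *m yvec A u d l) (rvec u l) (A^T *m (Binv *m a)) (evec j) => M r W E.
by apply/matrixP => i k; rewrite !mxE; ring.
Qed.

Lemma aTy_shift : aTy A u d l' j = aTy A u d l j - c / 2 * d j 0 * Bquad.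
Proof.
by rewrite /aTy /Bquad -mulmxA yvec_shift mulmxBr -scalemxAr !mxE.
Qed.

Lemma certified_shift (Lam : 'M[R]_m) :
  0 <= c -> certified A u l Lam -> certified A u l' Lam.
Proof.
move=> c_ge0 [ALam [Lam_ge0 l_le]]; do 2!split=> //; move=> i.
apply: le_trans (l_le i); rewrite !mxE lerBlDr lerDl.
by apply: mulr_ge0 => //; case: eqP; rewrite ?ler01.
Qed.

Lemma tvec_sub_vvec : tvec A u d l j 0 - vvec u l j 0 = aTy A u d l j - u j 0.
Proof.
have -> : tvec A u d l j 0 = aTy A u d l j - rvec u l j 0.
  by rewrite /tvec /aTy !mxE; congr (_ - _); apply: eq_bigr => k _; rewrite !mxE.
by rewrite /rvec /vvec !mxE; field.
Qed.

Lemma gammai_sqr : 0 < gammai A u d l j -> gammai A u d l j ^+ 2 = fval A u d l * Bquad.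
Proof. by rewrite /gammai sqrtr_gt0 => /ltW; exact: sqr_sqrtr. Qed.

Hypothesis unitB : Bmx A d \in unitmx.

Lemma fval_shift : fval A u d l' = fval A u d l
  - c * d j 0 * (tvec A u d l j 0 - vvec u l j 0) + (c / 2) ^+ 2 * d j 0 ^+ 2 * Bquad.
Proof.
set w := A^T *m (Binv *m a).
have tw : dform d (tvec A u d l) w = 0 by rewrite dform_trmxr ADmx_tvec // trmx0 mul0mx mxE.
have ww : dform d w w = Bquad by rewrite dform_trmxr ADmx_invB // mulmxA.
have ew : dform d (evec j) w = d j 0 * Bquad.
  by rewrite dform_trmxr ADmx_evec linearZ -scalemxAl mxE mulmxA.
have ee : dform d (evec j) (evec j) = d j 0 by rewrite dform_evecr mxE !eqxx mul1r.
rewrite !fvalE vvec_shift tvec_shift -scaleNr !dformDZ !dformDZr tw ww ew ee.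
by rewrite !dform_evecr; field.
Qed.

End LowerBoundShift.

Theorem lemma5 (R : rcfType) (n m : nat) (A : 'M[R]_(n, m)) (u : 'cV[R]_m)
  (d l : 'cV[R]_m) (Lam : 'M[R]_m) (j : 'I_m) :
  unit_columns A -> pos_spanning A ->
  (forall i, 0 < d i 0) ->
  certified A u l Lam ->
  fval A u d l = 1 ->
  0 < aTy A u d l j - u j 0 <= gammai A u d l j ->
  let l1 := l - ((2 * (tvec A u d l j 0 - vvec u l j 0))
                   / (d j 0 * gammai A u d l j ^+ 2)) *: evec j in
  [/\ certified A u l1 Lam,
      aTy A u d l1 j = u j 0,
      fval A u d l1 = 1 - ((aTy A u d l j - u j 0) / gammai A u d l j) ^+ 2
    & 1 - ((aTy A u d l j - u j 0) / gammai A u d l j) ^+ 2 < 1].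
Proof.
move=> _ spanA d_gt0 cert f1 /andP[gap_gt0 gap_le] l1.
have unitB := Bmx_unit d_gt0 spanA.
have gam_gt0 : 0 < gammai A u d l j := lt_le_trans gap_gt0 gap_le.
have gam2 : gammai A u d l j ^+ 2 = Bquad A d j by rewrite gammai_sqr // f1 mul1r.
have Bq_gt0 : 0 < Bquad A d j by rewrite -gam2 exprn_gt0.
have dj_gt0 := d_gt0 j.
rewrite /l1 tvec_sub_vvec gam2; split.
- by apply: certified_shift cert; rewrite divr_ge0 ?mulr_ge0 ?ltW.
- by rewrite aTy_shift; field; rewrite !gt_eqF.
- by rewrite fval_shift // tvec_sub_vvec f1 -gam2; field; rewrite !gt_eqF.
- by rewrite gtrBl exprn_gt0 ?divr_gt0.
Qed.
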